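(* Let $\eta\in Q^+\setminus\{0\}$, $g\in U(\mathfrak n^-_{r-1}[t])_{-\eta}$, and $(\underline\ell,\underline{\mathbf s})\in\mathbf F_+^r$. Then $[\underline{\mathbf x}^+_r(\underline\ell,\underline{\mathbf s}),g]$ is a linear combination of elements $g'\,\underline{\mathbf x}^+_r(\underline\ell',\underline{\mathbf s}')$ with $g'\in U(\mathfrak n^-_{r-1}[t])$, $(\underline\ell',\underline{\mathbf s}')\in\mathbf F_+^r$ and $|\underline{\mathbf s}'|\blacktriangleright|\underline{\mathbf s}|$.
   Context: $\mathfrak g=\mathfrak{sl}_{r+1}(\mathbb C)$, $r\ge2$, $\mathfrak h$ diagonal, simple roots $\alpha_i$, $Q^+=\sum\mathbb N\alpha_i$; $x^+_{i,j}=E_{i,j+1}$, $x^-_{i,j}=E_{j+1,i}$; $\mathfrak n^-_{r-1}=\bigoplus_{1\le i\le j\le r-1}\mathbb Cx^-_{i,j}$; $\mathfrak a[t]=\mathfrak a\otimes\mathbb C[t]$. $U(\mathfrak n^-_{r-1}[t])_{-\eta}$ is the $-\eta$ weight space for the adjoint action of $\mathfrak h$. $\mathbf F_+$: pairs $(\ell,\mathbf s)$ with $\ell\in\mathbb N$, $\mathbf s=(\mathbf s(1)\le\dots\le\mathbf s(\ell))$, all $\mathbf s(p)\in\mathbb N_+$ (including $(0,\emptyset)$), $|\mathbf s|=\sum\mathbf s(p)$. $\mathbf x^+_{i,r}(\ell,\mathbf s)=\prod_p(x^+_{i,r}\otimes t^{\mathbf s(p)})$, $\underline{\mathbf x}^+_r(\underline\ell,\underline{\mathbf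 s})=\mathbf x^+_{1,r}(\ell_1,\mathbf s_1)\cdots\mathbf x^+_{r,r}(\ell_r,\mathbf s_r)$, $|\underline{\mathbf s}|=(|\mathbf s_1|,\dots,|\mathbf s_r|)$. For $\underline d,\underline d'\in\mathbb N^r$, $\underline d\blacktriangleright\underline d'$ means that for some $s$, $d_i=d'_i$ for all $i>s$ and $d_s>d'_s$. *)

From HB Require Import structures.
From mathcomp Require Import all_boot all_order all_algebra.
Set Implicit Arguments. Unset Strict Implicit. Unset Printing Implicit Defensive.
Import Order.TTheory GRing.Theory Num.Theory.
Local Open Scope ring_scope.

(* Prop-valued list membership (no eqType needed) *)
Fixpoint lIn (T : Type) (x : T) (l : seq T) : Prop :=
  if l is y :: l' then y = x \/ lIn x l' else False.

(* g = sl_{r+1}: (r+1)x(r+1) matrices of trace 0; indices are 1-based in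
   the paper, 0-based ('I_(r.+1)) here. *)

(* x^+_{i,j} = E_{i,j+1} ,  x^-_{i,j} = E_{j+1,i}  (paper's 1-based indices) *)
Definition xplus (K : fieldType) (r i j : nat) : 'M[K]_(r.+1) :=
  delta_mx (inord i.-1) (inord j).
Definition xminus (K : fieldType) (r i j : nat) : 'M[K]_(r.+1) :=
  delta_mx (inord j) (inord i.-1).

(* phi a X  represents the image of  X (x) t^a  under a Lie algebra
   homomorphism  sl_{r+1}[t] -> A  (A with commutator bracket). *)
Definition is_loop_sl_hom (K : fieldType) (A : algType K) (r : nat)
  (phi : nat -> 'M[K]_(r.+1) -> A) : Prop :=
  (forall a (c : K) (X Y : 'M[K]_(r.+1)), phi a (c *: X + Y) = c *: phi a X + phi a Y)
  /\ (forall a b (X Y : 'M[K]_(r.+1)), \tr X = 0 -> \tr Y = 0 ->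
        phi a X * phi b Y - phi b Y * phi a X = phi (a + b)%N (X *m Y - Y *m X)).

(* basis monomials of n^-_{r-1}[t]: triples (i,j,a) standing for x^-_{i,j} (x) t^a *)
Definition nminus_letter (r : nat) (m : nat * nat * nat) : bool :=
  [&& 1 <= m.1.1, m.1.1 <= m.1.2 & m.1.2 <= r.-1]%N.

Definition nminus_word (K : fieldType) (A : algType K) (r : nat)
  (phi : nat -> 'M[K]_(r.+1) -> A) (w : seq (nat * nat * nat)) : A :=
  \prod_(m <- w) phi m.2 (xminus K r m.1.1 m.1.2).

(* y lies in the image of U(n^-_{r-1}[t]) (the subalgebra generated by the
   images of the x^-_{i,j} (x) t^a, 1 <= i <= j <= r-1) *)
Definition in_U_nminus (K : fieldType) (A : algType K) (r : nat)
  (phi : nat -> 'M[K]_(r.+1) -> A) (y : A) : Prop :=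
  exists l : seq (K * seq (nat * nat * nat)),
    (forall p, lIn p l -> all (nminus_letter r) p.2) /\
    y = \sum_(p <- l) p.1 *: nminus_word phi p.2.

(* eta = sum_k eta_k alpha_{k+1} in Q^+ (0-based k < r), evaluated at h in the
   Cartan subalgebra: alpha_{k+1}(h) = h_{kk} - h_{k+1,k+1}. *)
Definition root_eval (K : fieldType) (r : nat) (eta : 'I_r -> nat)
  (h : 'M[K]_(r.+1)) : K :=
  \sum_(k < r) (eta k)%:R * (h (inord k) (inord k) - h (inord k.+1) (inord k.+1)).

(* y has weight -eta for the adjoint action of h (identified with h (x) t^0) *)
Definition has_weight_neg (K : fieldType) (A : algType K) (r : nat)
  (phi : nat -> 'M[K]_(r.+1) -> A) (eta : 'I_r -> nat) (y : A) : Prop :=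
  forall h : 'M[K]_(r.+1), is_diag_mx h -> \tr h = 0 ->
    phi 0%N h * y - y * phi 0%N h = - (root_eval eta h) *: y.

(* An element of F_+^r: for each i in 1..r (0-based k < r) a nondecreasing
   sequence s_i of positive integers; ell_i = size s_i. *)
Definition in_Fplus (s : seq nat) : bool := sorted leq s && all (fun x => 0 < x)%N s.
Definition in_Fplus_r (r : nat) (S : 'I_r -> seq nat) : Prop :=
  forall k, in_Fplus (S k).

Definition xplus_mono (K : fieldType) (A : algType K) (r : nat)
  (phi : nat -> 'M[K]_(r.+1) -> A) (i : nat) (s : seq nat) : A :=
  \prod_(a <- s) phi a (xplus K r i r).

Definition xplus_r (K : fieldType) (A : algType K) (r : nat)
  (phi : nat -> 'M[K]_(r.+1) -> A) (S : 'I_r -> seq nat) : A :=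
  \prod_(k < r) xplus_mono phi k.+1 (S k).

Definition abs_s (r : nat) (S : 'I_r -> seq nat) : 'I_r -> nat :=
  fun k => sumn (S k).

Definition btri (r : nat) (d d' : 'I_r -> nat) : Prop :=
  exists s : 'I_r, (forall i : 'I_r, (s < i)%N -> d i = d' i) /\ (d' s < d s)%N.

From HB Require Import structures.
From mathcomp Require Import all_boot all_order all_algebra.
From mathcomp Require Import zify.
From Stdlib Require Import FunctionalExtensionality.
Import Order.TTheory GRing.Theory Num.Theory.
Set Implicit Arguments. Unset Strict Implicit. Unset Printing Implicit Defensive.
Local Open Scope ring_scope.

(* [x^+_{k,r} t^a, x^-_{i,j} t^b] vanishes unless i = k, in which
   case it is -x^+_{j+1,r} t^{a+b} with j + 1 > k.  Moving a single
   x^+_{k,r} t^a across a monomial of U(n^-_{r-1}[t]) therefore only creates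
   terms g' x^+_{j,r} t^c with j > k and c > 0, whose degree vector dominates
   that of x^+_{k,r} t^a for |>.  Since the x^+_{k,r} t^a commute with each
   other and |> is compatible with addition of degree vectors, the Leibniz rule
   extends this from one factor to the whole product x^+_r(l, s). *)

Lemma lIn_cat T (x : T) l1 l2 : lIn x (l1 ++ l2) -> lIn x l1 \/ lIn x l2.
Proof. elim: l1 => [|y l IH] /=; first by right. by case=> [->|/IH [H|H]]; auto. Qed.

Lemma lIn_map T U (f : T -> U) y l : lIn y (map f l) -> exists x, lIn x l /\ y = f x.
Proof.
elim: l => [|z l IH] //= [<-|/IH [x [H1 H2]]]; first by exists z; split; [left|].
by exists x; split; [right|].
Qed.

Lemma perm_prodr_comm (R : pzSemiRingType) (T : eqType) (f : T -> R) (s t : seq T) :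
  (forall x y, GRing.comm (f x) (f y)) -> perm_eq s t ->
  \prod_(x <- s) f x = \prod_(x <- t) f x.
Proof.
move=> fC; elim: s t => [|x s IH] t Hst.
  by move: (perm_size Hst) => /= /esym/size0nil ->.
have Hx : x \in t by rewrite -(perm_mem Hst) mem_head.
case: (splitPr Hx) Hst => t1 t2 Hst.
have Hst' : perm_eq s (t1 ++ t2).
  by rewrite -(perm_cons x); apply: (perm_trans Hst); rewrite -cat1s perm_catCA.
rewrite big_cons big_cat big_cons (IH _ Hst') big_cat /= !mulrA.
by congr (_ * _); apply: commr_prod => i _; exact: fC.
Qed.

Section Dominance.
Variable r : nat.
Implicit Types d e f : 'I_r -> nat.

Lemma btri_trans d e f : btri d e -> btri e f -> btri d f.
Proof.
move=> [s1 [H1 L1]] [s2 [H2 L2]].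
case: (ltngtP s1 s2) => Hs.
- by exists s2; split; [move=> i Hi; rewrite H1 ?H2 //; lia | rewrite H1].
- by exists s1; split; [move=> i Hi; rewrite H1 ?H2 //; lia | rewrite -H2].
- have E : s1 = s2 by apply: val_inj.
  by subst s2; exists s1; split; [move=> i Hi; rewrite H1 ?H2 | lia].
Qed.

Lemma btri_addr d e f : btri d e -> btri (fun k => d k + f k)%N (fun k => e k + f k)%N.
Proof. by move=> [s [H L]]; exists s; split; [move=> i Hi; rewrite H | lia]. Qed.

Lemma btri_addl d e f : btri d e -> btri (fun k => f k + d k)%N (fun k => f k + e k)%N.
Proof. by move=> [s [H L]]; exists s; split; [move=> i Hi; rewrite H | lia]. Qed.

End Dominance.

Section Matrices.
Variables (K : fieldType) (r : nat).

Lemma trace_delta_mx n (i j : 'I_n) : i != j -> \tr (delta_mx i j : 'M[K]_n) = 0.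
Proof.
move=> Hij; rewrite /mxtrace big1 // => k _; rewrite mxE.
by case: (k =P i) => [->|]; rewrite ?(negbTE Hij) //= andbF.
Qed.

Lemma inord_neq (i j : nat) : (i <= r)%N -> (j <= r)%N -> i != j ->
  (inord i : 'I_r.+1) != inord j.
Proof.
move=> Hi Hj Hij; apply/eqP => /(congr1 (@nat_of_ord _)); rewrite !inordK ?ltnS //.
by move/eqP; rewrite (negbTE Hij).
Qed.

Lemma tr_xplus k : (k < r)%N -> \tr (xplus K r k.+1 r) = 0.
Proof. by move=> Hk; apply: trace_delta_mx; apply: inord_neq => /=; lia. Qed.

Lemma tr_xminus i j : [&& 1 <= i, i <= j & j <= r.-1]%N -> \tr (xminus K r i j) = 0.
Proof. by case/and3P=> *; apply: trace_delta_mx; apply: inord_neq; lia. Qed.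

Lemma mulmx_xplus k k' : (k' < r)%N -> xplus K r k.+1 r *m xplus K r k'.+1 r = 0.
Proof.
by move=> Hk'; rewrite /xplus mul_delta_mx_cond (negbTE (inord_neq _ _ _)) //; lia.
Qed.

Lemma lie_xplus_xminus k i j : (k < r)%N -> [&& 1 <= i, i <= j & j <= r.-1]%N ->
  xplus K r k.+1 r *m xminus K r i j - xminus K r i j *m xplus K r k.+1 r =
  if i == k.+1 then - xplus K r j.+1 r else 0.
Proof.
move=> Hk /and3P [H1 H2 H3].
rewrite /xplus /xminus !mul_delta_mx_cond /=.
rewrite (negbTE (inord_neq _ _ _)) ?mulr0n ?sub0r; [|lia|lia|lia].
have -> : ((inord i.-1 : 'I_r.+1) == inord k) = (i == k.+1).
  apply/eqP/eqP => [/(congr1 (@nat_of_ord _))|->] //; rewrite !inordK; lia.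
by case: (i == k.+1); rewrite ?mulr1n ?mulr0n ?oppr0.
Qed.

End Matrices.

Definition Fpos r (S : 'I_r -> seq nat) := forall k, all (fun x => 0 < x)%N (S k).

Definition esing r (k0 : 'I_r) (a : nat) : 'I_r -> seq nat :=
  fun k => if k == k0 then [:: a] else [::].

Lemma abs_s_cat r (S T : 'I_r -> seq nat) :
  abs_s (fun k => S k ++ T k) = fun k => (abs_s S k + abs_s T k)%N.
Proof. by apply: functional_extensionality => k; rewrite /abs_s sumn_cat. Qed.

Lemma abs_s_sort r (S : 'I_r -> seq nat) : abs_s (fun k => sort leq (S k)) = abs_s S.
Proof.
by apply: functional_extensionality => k; apply: perm_sumn; rewrite perm_sort.
Qed.

Lemma btri_esing r (k0 j : 'I_r) a b : (k0 < j)%N -> (0 < b)%N ->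
  btri (abs_s (esing j b)) (abs_s (esing k0 a)).
Proof.
have ord_gt_neq (x y : 'I_r) : (x < y)%N -> (y == x) = false.
  by move=> Hxy; apply/eqP => E; move: Hxy; rewrite E ltnn.
move=> Hk Hb; exists j; split => [i Hi|]; rewrite /abs_s /esing.
  by rewrite !ord_gt_neq //; exact: ltn_trans Hi.
by rewrite eqxx ord_gt_neq //= addn0.
Qed.

Lemma in_Fplus_sort (s : seq nat) : all (fun x => 0 < x)%N s -> in_Fplus (sort leq s).
Proof.
have Hsort : perm_eq (sort leq s) s by rewrite perm_sort.
by move=> Hs; rewrite /in_Fplus (sort_sorted leq_total) (perm_all _ Hsort).
Qed.

Section Bracket.
Variables (K : fieldType) (A : algType K) (r : nat) (phi : nat -> 'M[K]_(r.+1) -> A).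
Hypothesis phi_hom : is_loop_sl_hom phi.

Definition ad (x y : A) := x * y - y * x.

Lemma adMr x y z : ad x (y * z) = ad x y * z + y * ad x z.
Proof. by rewrite /ad mulrBl mulrBr !mulrA addrA subrK. Qed.

Lemma adMl x y z : ad (x * y) z = x * ad y z + ad x z * y.
Proof. by rewrite /ad mulrBl mulrBr !mulrA addrA subrK. Qed.

Lemma adDr x y z : ad x (y + z) = ad x y + ad x z.
Proof. by rewrite /ad mulrDr mulrDl opprD addrACA. Qed.

Lemma adZr x c y : ad x (c *: y) = c *: ad x y.
Proof. by rewrite /ad -scalerAr -scalerAl scalerBr. Qed.

Lemma phi0 a : phi a 0 = 0.
Proof.
have := phi_hom.1 a 1 0 0; rewrite !scale1r !addr0 => H.
by have := congr1 (fun z => z - phi a 0) H; rewrite addrK subrr.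
Qed.

Lemma phiN a X : phi a (- X) = - phi a X.
Proof. by have := phi_hom.1 a (-1) X 0; rewrite addr0 phi0 addr0 !scaleN1r. Qed.

Local Notation xp a k := (phi a (xplus K r k.+1 r)).

Lemma xp_comm a b k k' : (k < r)%N -> (k' < r)%N -> GRing.comm (xp a k) (xp b k').
Proof.
move=> Hk Hk'; apply/eqP; rewrite -subr_eq0.
by rewrite (phi_hom.2 _ _ _ _ (tr_xplus K Hk) (tr_xplus K Hk')) !mulmx_xplus // subrr phi0.
Qed.

Lemma ad_xp_xminus a k m : (k < r)%N -> nminus_letter r m ->
  ad (xp a k) (phi m.2 (xminus K r m.1.1 m.1.2)) =
  if m.1.1 == k.+1 then - xp (a + m.2)%N m.1.2 else 0.
Proof.
move=> Hk Hm; rewrite /ad (phi_hom.2 _ _ _ _ (tr_xplus K Hk) (tr_xminus K Hm)).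
by rewrite lie_xplus_xminus //; case: eqP; rewrite ?phiN ?phi0.
Qed.

Lemma xplus_r_cat S T :
  xplus_r phi (fun k => S k ++ T k) = xplus_r phi S * xplus_r phi T.
Proof.
rewrite /xplus_r -prodrM_comm => [|i j _ _].
  by apply: eq_bigr => k _; rewrite /xplus_mono big_cat.
by apply: commr_prod => b _; apply: commr_sym; apply: commr_prod => *; apply: xp_comm.
Qed.

Lemma xplus_r_nil : xplus_r phi (fun _ => [::]) = 1.
Proof. by rewrite /xplus_r big1 // => k _; rewrite /xplus_mono big_nil. Qed.

Lemma xplus_r_esing k0 a : xplus_r phi (esing k0 a) = xp a k0.
Proof.
rewrite /xplus_r (eq_bigr (fun k : 'I_r => if k == k0 then xp a k else 1)).
  by rewrite -big_mkcond big_pred1_eq.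
by move=> k _; rewrite /esing /xplus_mono; case: (k == k0); rewrite ?big_seq1 ?big_nil.
Qed.

Lemma xplus_r_sort S : xplus_r phi (fun k => sort leq (S k)) = xplus_r phi S.
Proof.
apply: eq_bigr => k _; apply: perm_prodr_comm; last by rewrite perm_sort.
by move=> x y; apply: xp_comm.
Qed.

Local Notation U := (in_U_nminus phi).

Lemma in_U0 : U 0.
Proof. by exists [::]; split => //; rewrite big_nil. Qed.

Lemma in_UD u v : U u -> U v -> U (u + v).
Proof.
move=> [l1 [H1 ->]] [l2 [H2 ->]]; exists (l1 ++ l2); split; last by rewrite big_cat.
by move=> p Hp; case: (lIn_cat Hp) => {}Hp; [exact: H1|exact: H2].
Qed.

Lemma in_UZ c u : U u -> U (c *: u).
Proof.
move=> [l [H ->]]; exists (map (fun p => (c * p.1, p.2)) l); split.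
  by move=> p Hp; case: (lIn_map Hp) => q [Hq ->]; exact: H Hq.
by rewrite big_map scaler_sumr; apply: eq_bigr => p _; rewrite scalerA.
Qed.

Lemma in_U_word w : all (nminus_letter r) w -> U (nminus_word phi w).
Proof.
move=> H; exists [:: (1, w)]; split; first by move=> p /= [<-|//].
by rewrite big_seq1 scale1r.
Qed.

Lemma in_U_ind (P : A -> Prop) u :
  P 0 -> (forall x y, P x -> P y -> P (x + y)) ->
  (forall c w, all (nminus_letter r) w -> P (c *: nminus_word phi w)) ->
  U u -> P u.
Proof.
move=> P0 PD Pw [l [H ->]]; elim: l H => [|p l IH] H; first by rewrite big_nil.
by rewrite big_cons; apply: PD; [apply: Pw; apply: H; left | apply: IH => q Hq; apply: H; right].
Qed.

Lemma in_U_wordM w v : all (nminus_letter r) w -> U v -> U (nminus_word phi w * v).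
Proof.
move=> Hw [l [H ->]]; exists (map (fun p => (p.1, w ++ p.2)) l); split.
  by move=> p Hp; case: (lIn_map Hp) => q [Hq ->] /=; rewrite all_cat Hw H.
by rewrite big_map mulr_sumr; apply: eq_bigr => p _; rewrite /nminus_word big_cat scalerAr.
Qed.

Lemma in_UM u v : U u -> U v -> U (u * v).
Proof.
move=> Hu Hv; apply: (in_U_ind (P := fun u => U (u * v))) Hu.
- by rewrite mul0r; exact: in_U0.
- by move=> x y Hx Hy; rewrite mulrDl; exact: in_UD.
- by move=> c w Hw; rewrite -scalerAl; apply: in_UZ; exact: in_U_wordM.
Qed.

(* The sequences s' here need not be sorted: sorting is postponed to the very
   end, which is harmless since the x^+_{k,r} t^a commute. *)
Definition span_above (D : 'I_r -> nat) (V : A) : Prop :=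
  exists l : seq (A * ('I_r -> seq nat)),
    (forall p, lIn p l -> [/\ U p.1, Fpos p.2 & btri (abs_s p.2) D]) /\
    V = \sum_(p <- l) p.1 * xplus_r phi p.2.

Lemma span0 D : span_above D 0.
Proof. by exists [::]; split => //; rewrite big_nil. Qed.

Lemma spanD D u v : span_above D u -> span_above D v -> span_above D (u + v).
Proof.
move=> [l1 [H1 ->]] [l2 [H2 ->]]; exists (l1 ++ l2); split; last by rewrite big_cat.
by move=> p Hp; case: (lIn_cat Hp) => {}Hp; [exact: H1|exact: H2].
Qed.

Lemma span_gen D g S :
  U g -> Fpos S -> btri (abs_s S) D -> span_above D (g * xplus_r phi S).
Proof. by move=> *; exists [:: (g, S)]; split; [move=> p /= [<-|//] | rewrite big_seq1]. Qed.

Lemma span_ind D (P : A -> Prop) V :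
  P 0 -> (forall x y, P x -> P y -> P (x + y)) ->
  (forall g S, U g -> Fpos S -> btri (abs_s S) D -> P (g * xplus_r phi S)) ->
  span_above D V -> P V.
Proof.
move=> P0 PD Pg [l [H ->]]; elim: l H => [|p l IH] H; first by rewrite big_nil.
rewrite big_cons; apply: PD; last by apply: IH => q Hq; apply: H; right.
by case: (H p (or_introl erefl)) => *; apply: Pg.
Qed.

Lemma span_mono D D' V : btri D D' -> span_above D V -> span_above D' V.
Proof.
move=> HD; apply: span_ind; [exact: span0 | exact: spanD |].
by move=> g S Hg HS HSD; apply: span_gen => //; exact: btri_trans HSD HD.
Qed.

Lemma spanZ D c V : span_above D V -> span_above D (c *: V).
Proof.
apply: (span_ind (P := fun V => span_above D (c *: V))) => [|x y Hx Hy|g S *].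
- by rewrite scaler0; exact: span0.
- by rewrite scalerDr; exact: spanD.
- by rewrite scalerAl; apply: span_gen => //; exact: in_UZ.
Qed.

Lemma spanN D V : span_above D V -> span_above D (- V).
Proof. by rewrite -scaleN1r; exact: spanZ. Qed.

Lemma span_mulU D u V : U u -> span_above D V -> span_above D (u * V).
Proof.
move=> Hu; apply: (span_ind (P := fun V => span_above D (u * V))) => [|x y Hx Hy|g S *].
- by rewrite mulr0; exact: span0.
- by rewrite mulrDr; exact: spanD.
- by rewrite mulrA; apply: span_gen => //; exact: in_UM.
Qed.

Lemma span_mulr_xplus D T V : Fpos T -> span_above D V ->
  span_above (fun k => D k + abs_s T k)%N (V * xplus_r phi T).
Proof.
move=> HT; apply: (span_ind (P := fun V => span_above _ (V * xplus_r phi T)))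
  => [|x y Hx Hy|g S Hg HS HSD].
- by rewrite mul0r; exact: span0.
- by rewrite mulrDl; exact: spanD.
rewrite -mulrA -xplus_r_cat; apply: span_gen => //.
  by move=> k; rewrite all_cat HS HT.
by rewrite abs_s_cat; exact: btri_addr.
Qed.

Definition ad_closed S :=
  forall u, U u -> span_above (abs_s S) (ad (xplus_r phi S) u).

Lemma span_mull_xplus D S V : Fpos S -> ad_closed S -> span_above D V ->
  span_above (fun k => abs_s S k + D k)%N (xplus_r phi S * V).
Proof.
move=> HS adS; apply: (span_ind (P := fun V => span_above _ (xplus_r phi S * V)))
  => [|x y Hx Hy|g T Hg HT HTD].
- by rewrite mulr0; exact: span0.
- by rewrite mulrDr; exact: spanD.
have -> : xplus_r phi S * (g * xplus_r phi T) =
          g * xplus_r phi (fun k => S k ++ T k) + ad (xplus_r phi S) g * xplus_r phi T.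
  by rewrite xplus_r_cat /ad mulrBl !mulrA addrC subrK.
apply: spanD.
  apply: span_gen => //; first by move=> k; rewrite all_cat HS HT.
  by rewrite abs_s_cat; exact: btri_addl.
by apply: span_mono (span_mulr_xplus HT (adS g Hg)); exact: btri_addl.
Qed.

Lemma ad_xp_word w k0 a : all (nminus_letter r) w -> (0 < a)%N ->
  span_above (abs_s (esing k0 a)) (ad (xp a k0) (nminus_word phi w)).
Proof.
elim: w k0 a => [|m w IH] k0 a /=.
  by move=> _ _; rewrite /nminus_word big_nil /ad mulr1 mul1r subrr; exact: span0.
case/andP=> Hm Hw Ha; set W := nminus_word phi w.
have -> : nminus_word phi (m :: w) = phi m.2 (xminus K r m.1.1 m.1.2) * W.
  by rewrite /nminus_word big_cons.
rewrite adMr; apply: spanD; last first.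
  apply: span_mulU; last exact: IH.
  by have := in_U_word (w := [:: m]); rewrite /nminus_word big_seq1 /= Hm; apply.
rewrite ad_xp_xminus //; case: eqP => Hi; last by rewrite mul0r; exact: span0.
have Hj : (m.1.2 < r)%N by move: Hm; rewrite /nminus_letter; lia.
have Hkj : (k0 < Ordinal Hj)%N by move: Hm; rewrite /nminus_letter /= Hi; lia.
have Hab : (0 < a + m.2)%N by lia.
(* Move x := x^+_{j+1,r} t^{a+b} to the right: -x W = -(W x) - [x, W], and
   [x, W] is handled by induction at the index j + 1 > k0. *)
have -> : - xp (a + m.2)%N m.1.2 * W =
          (- W) * xplus_r phi (esing (Ordinal Hj) (a + m.2)%N)
          - ad (xp (a + m.2)%N (Ordinal Hj)) W.
  by rewrite xplus_r_esing /ad !mulNr opprB addKr.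
apply: spanD; last by apply: spanN; apply: span_mono (IH _ _ Hw Hab); exact: btri_esing.
apply: span_gen; last exact: btri_esing.
- by rewrite -scaleN1r; apply: in_UZ; exact: in_U_word.
- by move=> k; rewrite /esing; case: (k == _) => //=; rewrite Hab.
Qed.

Lemma ad_closed_esing k0 a : (0 < a)%N -> ad_closed (esing k0 a).
Proof.
move=> Ha u; rewrite xplus_r_esing.
apply: (in_U_ind (P := fun u => span_above _ (ad _ u))) => [|x y Hx Hy|c w Hw].
- by rewrite /ad mulr0 mul0r subrr; exact: span0.
- by rewrite adDr; exact: spanD.
- by rewrite adZr; apply: spanZ; exact: ad_xp_word.
Qed.

Lemma ad_closed_nil : ad_closed (fun _ => [::]).
Proof. by move=> u _; rewrite xplus_r_nil /ad mul1r mulr1 subrr; exact: span0. Qed.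

Lemma ad_closed_cat S T : Fpos S -> Fpos T -> ad_closed S -> ad_closed T ->
  ad_closed (fun k => S k ++ T k).
Proof.
move=> HS HT adS adT u Hu; rewrite xplus_r_cat adMl abs_s_cat.
apply: spanD; first exact: span_mull_xplus HS adS (adT u Hu).
exact: span_mulr_xplus HT (adS u Hu).
Qed.

Lemma ad_closed_Fpos S : Fpos S -> ad_closed S.
Proof.
have [n] := ubnP (\sum_k size (S k)); elim: n S => // n IH S lt_size HS.
have [k0 | S_nil] := pickP (fun k => S k != [::]); last first.
  have -> : S = fun _ => [::].
    by apply: functional_extensionality => k; apply/eqP; rewrite -[_ == _]negbK S_nil.
  exact: ad_closed_nil.
case ES: (S k0) => [|a s] // _.
have /andP [Ha Hs] : all (fun x => 0 < x)%N (a :: s) by rewrite -ES.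
pose T k := if k == k0 then s else S k.
have size_S : (\sum_k size (S k) = (\sum_k size (T k)).+1)%N.
  rewrite (bigD1 k0) //= [in RHS](bigD1 k0) //= ES /T eqxx addSn.
  by congr (_ + _).+1; apply: eq_bigr => k /negbTE ->.
have HT : Fpos T by move=> k; rewrite /T; case: eqP.
have -> : S = fun k => esing k0 a k ++ T k.
  by apply: functional_extensionality => k; rewrite /T /esing; case: eqP => [->|].
apply: ad_closed_cat => //; last by apply: IH HT; rewrite -ltnS -size_S.
- by move=> k; rewrite /esing; case: (k == k0); rewrite //= Ha.
- exact: ad_closed_esing.
Qed.

End Bracket.

Theorem lemma3p4 (K : numClosedFieldType) (A : algType K) (r : nat)
  (phi : nat -> 'M[K]_(r.+1) -> A) (eta : 'I_r -> nat) (g : A)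
  (S : 'I_r -> seq nat) :
  (2 <= r)%N ->
  is_loop_sl_hom phi ->
  (exists k, eta k <> 0%N) ->
  in_U_nminus phi g -> has_weight_neg phi eta g ->
  in_Fplus_r S ->
  exists l : seq (A * ('I_r -> seq nat)),
    (forall p, lIn p l ->
       [/\ in_U_nminus phi p.1, in_Fplus_r p.2 & btri (abs_s p.2) (abs_s S)]) /\
    xplus_r phi S * g - g * xplus_r phi S = \sum_(p <- l) p.1 * xplus_r phi p.2.
Proof.
move=> _ phi_hom _ Hg _ HS.
have HSpos : Fpos S by move=> k; case/andP: (HS k).
have [l [Hl E]] := ad_closed_Fpos phi_hom HSpos Hg.
exists (map (fun p => (p.1, fun k => sort leq (p.2 k))) l); split.
  move=> p Hp; case: (lIn_map Hp) => q [Hq ->] /=; case: (Hl q Hq) => Hq1 Hq2 Hq3.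
  by split => //; [move=> k; exact: in_Fplus_sort | rewrite abs_s_sort].
by rewrite [LHS]E big_map; apply: eq_bigr => p _; rewrite xplus_r_sort.
Qed.
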